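(* Let $\Omega$ be a completely regular Hausdorff space with Stone–Čech compactification $\beta\Omega$. Let $A \subset C(\Omega, [0, 1])$, or let $A$ be a self-adjoint subalgebra of $C_{b}(\Omega, \mathbb{C})$. If $A$ separates disjoint zero-sets of $\Omega$, then for any $A$-antisymmetric $z$-filter $\mathcal{F}$ on $\Omega$, the set $\bigcap_{F \in \mathcal{F}}\mathrm{cl}_{\beta}F$ consists of exactly one point of $\beta \Omega$.
   Context: $\mathrm{cl}_\beta$ denotes closure in $\beta\Omega$; $C_b$ denotes bounded continuous functions. A zero-set is $h^{-1}(0)$ for some $h\in C(\Omega,\mathbb{R})$. $A$ separates disjoint zero-sets of $\Omega$ if for disjoint zero-sets $Z_1,Z_2$ there is $\varphi\in A$ with $\overline{\varphi(Z_1)}\cap\overline{\varphi(Z_2)}=\emptyset$. A $z$-filter is a nonempty family $\mathcal{F}$ of zero-sets with $\emptyset\notin\mathcal{F}$, closed under finite intersections and under passing to larger zero-sets. $\mathcal{F}$ is $A$-antisymmetric if for each $\phi\in A$ with $\bigcap_{F\in\mathcal{F}}\overline{\phi(F)}\subset[0,1]$ (closures in $\mathbb{C}\cup\{\infty\}$), this intersection is a single point. *)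

From HB Require Import structures.
From mathcomp Require Import all_boot all_order all_algebra.
From mathcomp Require Import complex.
From mathcomp Require Import all_classical all_reals all_analysis.
Import Order.TTheory GRing.Theory Num.Theory.
Import numFieldTopology.Exports.

Set Implicit Arguments.
Unset Strict Implicit.
Unset Printing Implicit Defensive.

Local Open Scope classical_set_scope.
Local Open Scope ring_scope.
Local Open Scope complex_scope.

(* Usual (modulus) topology on the complex numbers R[i]. *)
HB.instance Definition _ (R : rcfType) := PseudoPointedMetric.copy R[i] (R[i])^o.

Definition is_stone_cech (T K : topologicalType) (e : T -> K) : Prop :=
  [/\ compact [set: K], hausdorff_space K, continuous e, injective e &
      (forall U : set T, open U -> exists V : set K, open V /\ U = e @^-1` V)]
  /\ closure (range e) = [set: K]
  /\ (forall (Y : topologicalType) (f : T -> Y),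
        compact [set: Y] -> hausdorff_space Y -> continuous f ->
        exists g : K -> Y, continuous g /\ g \o e = f).

Definition zero_set (R : realType) (T : topologicalType) (Z : set T) : Prop :=
  exists h : T -> R, continuous h /\ Z = h @^-1` [set 0].

Definition separates_zero_sets (R : realType) (T : topologicalType)
    (A : set (T -> R[i])) : Prop :=
  forall Z1 Z2 : set T, zero_set R Z1 -> zero_set R Z2 -> Z1 `&` Z2 = set0 ->
    exists2 phi, A phi & closure (phi @` Z1) `&` closure (phi @` Z2) = set0.

Definition z_filter (R : realType) (T : topologicalType) (F : set (set T)) : Prop :=
  [/\ F !=set0,
      (forall Z, F Z -> zero_set R Z),
      ~ F set0,
      (forall Z1 Z2, F Z1 -> F Z2 -> F (Z1 `&` Z2)) &
      (forall Z1 Z2, F Z1 -> zero_set R Z2 -> Z1 `<=` Z2 -> F Z2)].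

(* The real unit interval [0,1] as a subset of C (the order on R[i] is
   z <= w iff w - z is a nonnegative real). *)
Definition unit_interval (R : rcfType) : set R[i] := [set z | 0 <= z <= 1].

(* A-antisymmetric z-filters.  All functions in A are bounded (in both cases
   of the theorem), so closures in C u {oo} coincide with closures in C. *)
Definition A_antisymmetric (R : realType) (T : topologicalType)
    (A : set (T -> R[i])) (F : set (set T)) : Prop :=
  forall phi, A phi ->
    \bigcap_(Z in F) closure (phi @` Z) `<=` @unit_interval R ->
    exists z : R[i], \bigcap_(Z in F) closure (phi @` Z) = [set z].

Definition in_C01 (R : realType) (T : topologicalType) (A : set (T -> R[i])) : Prop :=
  forall phi, A phi -> continuous phi /\ forall x, 0 <= phi x <= 1.

Definition selfadjoint_subalgebra_Cb (R : realType) (T : topologicalType)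
    (A : set (T -> R[i])) : Prop :=
  [/\ (forall phi, A phi ->
         continuous phi /\ exists M : R, forall x, `|phi x| <= M%:C),
      A (fun _ => 0),
      (forall phi psi, A phi -> A psi -> A (fun x => phi x + psi x)) &
      (forall (c : R[i]) phi, A phi -> A (fun x => c * phi x))]
  /\ (forall phi psi, A phi -> A psi -> A (fun x => phi x * psi x))
  /\ (forall phi, A phi -> A (fun x => (phi x)^*)).

(* By compactness of βΩ the closures cl_β Z, Z ∈ 𝓕, have a common point p.
   If q ≠ p were another one, Urysohn's lemma on βΩ yields disjoint zero-sets
   Z1, Z2 of Ω such that every Z ∈ 𝓕 meets both, and some φ ∈ A separates
   them.  Rescale φ into the compact square [-1,1]² and take cluster points
   a1, a2 of its traces on the Z ∩ Z1 and on the Z ∩ Z2.  For every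
   ψ = Q ∘ φ ∈ A with values in [0,1], Q a1 and Q a2 both lie in
   ⋂_Z cl ψ(Z), which antisymmetry makes a singleton.  Taking ψ = φ (first
   case), or real polynomials without constant term in Re φ and Im φ (second
   case), forces φ to have the same limit value at a1 and a2, which is then a
   common point of cl φ(Z1) and cl φ(Z2). *)

From HB Require Import structures.
From mathcomp Require Import all_boot all_order all_algebra.
From mathcomp Require Import complex.
From mathcomp Require Import all_classical all_reals all_analysis.
From mathcomp Require Import lra.
Import Order.TTheory GRing.Theory Num.Theory.
Import numFieldTopology.Exports.
Local Open Scope classical_set_scope.
Local Open Scope ring_scope.
Local Open Scope complex_scope.

Section ComplexCoordinates.
Context {R : realType}.
Implicit Types (u v : R) (z w : R[i]).

Lemma normc_le_normD u v : `|u +i* v| <= (`|u| + `|v|)%:C.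
Proof.
rewrite normc_def /= lecR -(ger0_norm (addr_ge0 (normr_ge0 u) (normr_ge0 v))).
rewrite -sqrtr_sqr ler_sqrt ?sqr_ge0 // sqrrD !real_normK ?num_real //.
by have := mulr_ge0 (normr_ge0 u) (normr_ge0 v); lra.
Qed.

Lemma normc_ge_Im z : `|complex.Im z|%:C <= `|z|.
Proof.
rewrite normc_def lecR -sqrtr_sqr ler_sqrt ?addr_ge0 ?sqr_ge0 //.
by rewrite lerDr sqr_ge0.
Qed.

Lemma continuous_complex (T : topologicalType) (g1 g2 : T -> R) :
  continuous g1 -> continuous g2 -> continuous (fun x => g1 x +i* g2 x).
Proof.
move=> cg1 cg2 x; apply/(@cvgrPdist_lt R[i] R[i]^o) => eps.
case: eps => a b; rewrite ltcE /= => /andP[/eqP -> a0].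
have /cvgrPdist_lt /(_ _ (divr_gt0 a0 (ltr0n _ 2))) near1 := cg1 x.
have /cvgrPdist_lt /(_ _ (divr_gt0 a0 (ltr0n _ 2))) near2 := cg2 x.
near=> t; apply: le_lt_trans (normc_le_normD _ _) _; rewrite ltcR.
have : `|g1 x - g1 t| < a / 2 by near: t.
have : `|g2 x - g2 t| < a / 2 by near: t.
lra.
Unshelve. all: end_near.
Qed.

Lemma continuous_realC (T : topologicalType) (g : T -> R) :
  continuous g -> continuous (fun x => (g x)%:C).
Proof. by move=> cg; apply: continuous_complex cg (@cst_continuous _ _ 0). Qed.

Lemma continuous_normc_contraction (h : R[i] -> R) :
  (forall z w, `|h z - h w|%:C <= `|z - w|) -> continuous h.
Proof.
move=> hlip z; apply: (@cvgrPdist_lt _ _ _ _ (nbhs_filter z) _ _).2 => e e0.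
have := (@cvgrPdist_lt R[i] R[i]^o _ _ _ _ _).1 (@cvg_id _ (nbhs (z : R[i]^o))) e%:C.
rewrite ltcR => /(_ (nbhs_filter _) e0); apply: filterS => w; rewrite -ltcR.
exact: le_lt_trans.
Qed.

Lemma continuous_Re : continuous (@complex.Re R).
Proof.
apply: continuous_normc_contraction => -[a b] [c d].
by rewrite -[a - c]/(complex.Re ((a +i* b) - (c +i* d))) normc_ge_Re.
Qed.

Lemma continuous_Im : continuous (@complex.Im R).
Proof.
apply: continuous_normc_contraction => -[a b] [c d].
by rewrite -[b - d]/(complex.Im ((a +i* b) - (c +i* d))) normc_ge_Im.
Qed.

Lemma closed_unit_interval : closed (@unit_interval R).
Proof.
have -> : @unit_interval R =
    @complex.Re R @^-1` `[0, 1] `&` @complex.Im R @^-1` [set 0].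
  apply/seteqP; split => -[a b]; rewrite /unit_interval /= !lecE /= in_itv /=.
    by case/andP=> /andP[/eqP <- ->] /andP[_ ->].
  by case=> /andP[a0 a1] ->; rewrite eqxx a0 a1.
apply: closedI; apply: (continuous_closedP _).1.
- exact: continuous_Re.
- exact: interval_closed.
- exact: continuous_Im.
- exact: closed_eq.
Qed.

Definition scaled_coords (M : R) z : R * R := (complex.Re z / M, complex.Im z / M).

Definition of_scaled_coords (M : R) (a : R * R) : R[i] := (M * a.1) +i* (M * a.2).

Lemma scaled_coordsK M : M != 0 -> cancel (scaled_coords M) (of_scaled_coords M).
Proof. by move=> M0 [a b]; rewrite /of_scaled_coords /= ![M * _]mulrC !divfK. Qed.

Lemma continuous_of_scaled_coords M : continuous (of_scaled_coords M).
Proof.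
by apply: continuous_complex => a; apply: cvgM;
  [exact: cvg_cst | exact: cvg_fst | exact: cvg_cst | exact: cvg_snd].
Qed.

Lemma scaled_coords_bound M z : 0 < M -> `|z| <= M%:C ->
  -1 <= (scaled_coords M z).1 <= 1 /\ -1 <= (scaled_coords M z).2 <= 1.
Proof.
move=> M0 zM; have bd r : `|r|%:C <= `|z| -> -1 <= r / M <= 1.
  move=> /le_trans /(_ zM); rewrite lecR -ler_norml normrM normfV.
  by rewrite (gtr0_norm M0) ler_pdivrMr // mul1r.
by split; apply: bd; [exact: normc_ge_Re | exact: normc_ge_Im].
Qed.

End ComplexCoordinates.

Lemma closure_image_continuous (X Y : topologicalType) (h : X -> Y) (S : set X) p :
  {for p, continuous h} -> closure S p -> closure (h @` S) (h p).
Proof.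
move=> ch clS B /ch /clS [x [Sx Bx]].
by exists (h x); split => //; exists x.
Qed.

Lemma closure_sub_closed {T : topologicalType} {E S : set T} :
  closed E -> S `<=` E -> closure S `<=` E.
Proof. by move=> /closure_id {2}-> /closureS. Qed.

Lemma compact_cluster_directed {T : topologicalType} {K : set T}
    {I : Type} {D : set I} {g : I -> set T} :
  compact K -> (exists2 i, D i & g i `<=` K) -> (forall i, D i -> g i !=set0) ->
  (forall i j, D i -> D j -> exists2 k, D k & g k `<=` g i `&` g j) ->
  exists p, forall i, D i -> closure (g i) p.
Proof.
move=> cK [i0 Di0 gK] ne dir.
have gF : Filter (filter_from D g).
  apply: filter_from_filter; first by exists i0.
  by move=> i j Di Dj; have [k Dk gk] := dir i j Di Dj; exists k.
have [|p [_ clp]] := cK _ (filter_from_proper gF ne); first by exists i0.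
by exists p => i Di B nB; apply: clp nB; exists i.
Qed.

Lemma compact_trace_cluster {T Y : topologicalType} {K : set Y} {F : set (set T)}
    {Z0 S : set T} {f : T -> Y} :
  compact K -> (forall x, K (f x)) -> F Z0 -> (forall Z Z', F Z -> F Z' -> F (Z `&` Z')) ->
  (forall Z, F Z -> Z `&` S !=set0) ->
  exists a, (forall Z, F Z -> closure (f @` Z) a) /\ closure (f @` S) a.
Proof.
move=> cK fK FZ0 FI meetS.
have [|||a cla] := @compact_cluster_directed _ K _ F (fun Z => f @` (Z `&` S)) cK.
- by exists Z0 => // _ [x _ <-].
- by move=> Z /meetS [x Zx]; exists (f x), x.
- move=> Z Z' FZ FZ'; exists (Z `&` Z'); first exact: FI.
  by move=> _ [x [[Zx Z'x] Sx] <-]; split; exists x.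
exists a; split => [Z FZ|].
  by apply: closureS (cla Z FZ); apply: image_subset; exact: subIsetl.
by apply: closureS (cla Z0 FZ0); apply: image_subset; exact: subIsetr.
Qed.

Section ZeroSets.
Variable R : realType.
Context {T : topologicalType}.

Lemma zero_set_le (k : T -> R) c : continuous k -> zero_set R [set x | k x <= c].
Proof.
move=> ck; exists (fun x => (k x - c) + `|k x - c|); split.
  have ckc x : (fun y => k y - c) @ x --> k x - c.
    by apply: cvgB; [exact: ck | exact: cvg_cst].
  by move=> x; apply: cvgD; [|apply: cvg_norm]; exact: ckc.
apply/seteqP; split => x /=.
  by rewrite -subr_le0 => kc; rewrite ler0_norm // subrr.
case: (leP (k x - c) 0) => [|kc]; first by rewrite subr_le0.
by rewrite gtr0_norm //; lra.
Qed.

Lemma zero_set_ge (k : T -> R) c : continuous k -> zero_set R [set x | c <= k x].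
Proof.
move=> ck; have -> : [set x | c <= k x] = [set x | - k x <= - c].
  by apply/seteqP; split => x /=; rewrite lerN2.
by apply: zero_set_le => x; apply: cvgN; exact: ck.
Qed.

Lemma separate_points_by_zero_sets {K : topologicalType} {e : T -> K} {p q : K} :
    compact [set: K] -> hausdorff_space K -> continuous e -> p <> q ->
  exists Z1 Z2, [/\ zero_set R Z1, zero_set R Z2, Z1 `&` Z2 = set0,
    (forall S, closure (e @` S) p -> S `&` Z1 !=set0) &
    (forall S, closure (e @` S) q -> S `&` Z2 !=set0)].
Proof.
move=> cK hK ce pq.
have aK := hausdorff_accessible hK.
have /(@uniform_separatorP _ R) [g [cg _ gp gq]] :=
  @normal_completely_regular R K (compact_normal hK cK) aK p [set q]
    (@accessible_closed_set1 K aK q) pq.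
have [g0 g1] : g p = 0 /\ g q = 1 by split; [apply: gp; exists p | apply: gq; exists q].
have cge : continuous (g \o e) by move=> x; apply: continuous_comp; [exact: ce | exact: cg].
exists [set x | g (e x) <= 1/3], [set x | 2/3 <= g (e x)]; split.
- exact: zero_set_le.
- exact: zero_set_ge.
- by apply/seteqP; split => x // [/= x13 x23]; exfalso; clear -x13 x23; lra.
- move=> S /(_ (g @^-1` [set r | r < 1/3])) [|_ [[x Sx <-] /ltW gx]]; last by exists x.
  by apply: cg; apply: open_nbhs_nbhs; split; [exact: open_lt | rewrite /= g0; lra].
- move=> S /(_ (g @^-1` [set r | 2/3 < r])) [|_ [[x Sx <-] /ltW gx]]; last by exists x.
  by apply: cg; apply: open_nbhs_nbhs; split; [exact: open_gt | rewrite /= g1; lra].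
Qed.

End ZeroSets.

Lemma sqr_cube_inj (R : numDomainType) (s t : R) :
  s ^+ 2 = t ^+ 2 -> s ^+ 3 = t ^+ 3 -> s = t.
Proof.
move=> /eqP; rewrite -subr_eq0 subr_sqr mulf_eq0 subr_eq0 => /orP[/eqP //|].
rewrite addr_eq0 => /eqP ->; rewrite exprNn -signr_odd /= mulN1r => /eqP.
rewrite eq_sym -subr_eq0 opprK -mulr2n mulrn_eq0 /= expf_eq0 /= => /eqP ->.
by rewrite oppr0.
Qed.

Section AntisymmetricClusterPoints.
Context {R : realType} {T : topologicalType} {A : set (T -> R[i])}.
Context {F : set (set T)} {Z0 : set T}.
Hypotheses (FZ0 : F Z0) (antiA : A_antisymmetric A F).
Context {f : T -> R * R} {a1 a2 : R * R}.
Hypotheses (cl_a1 : forall Z, F Z -> closure (f @` Z) a1)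
           (cl_a2 : forall Z, F Z -> closure (f @` Z) a2).

Lemma antisymmetric_cluster_eq (Q : R * R -> R[i]) :
  continuous Q -> A (Q \o f) -> (forall x, 0 <= Q (f x) <= 1) -> Q a1 = Q a2.
Proof.
move=> cQ AQ Q01.
have [|z Iz] := antiA _ AQ.
  move=> y /(_ Z0 FZ0); apply: (closure_sub_closed (@closed_unit_interval R)).
  by move=> _ [x _ <-]; exact: Q01.
have QI a : (forall Z, F Z -> closure (f @` Z) a) ->
    (\bigcap_(Z in F) closure ((Q \o f) @` Z)) (Q a).
  move=> cla Z FZ; rewrite -image_comp.
  exact: closure_image_continuous (cQ a) (cla Z FZ).
by move: (QI _ cl_a1) (QI _ cl_a2); rewrite Iz => -> ->.
Qed.

Hypotheses (addA : forall phi psi, A phi -> A psi -> A (fun x => phi x + psi x))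
           (mulA : forall phi psi, A phi -> A psi -> A (fun x => phi x * psi x))
           (scaleA : forall (c : R[i]) phi, A phi -> A (fun x => c * phi x)).

Lemma antisymmetric_cluster_eq_real (k : R * R -> R) :
  continuous k -> A (fun x => (k (f x))%:C) -> (forall x, -1 <= k (f x) <= 1) ->
  k a1 = k a2.
Proof.
move=> ck Ak k_bd.
have P_eq (P : R -> R) : continuous P -> A (fun x => (P (k (f x)))%:C) ->
    (forall s, -1 <= s <= 1 -> 0 <= P s <= 1) -> P (k a1) = P (k a2).
  move=> cP AP P01; apply: complexI.
  apply: (antisymmetric_cluster_eq (fun a => (P (k a))%:C)) => //.
    by apply: continuous_realC => a; apply: continuous_comp (ck a) (cP _).
  by move=> x; rewrite ler0c -[1 : R[i]]/(1%:C) lecR; apply/P01/k_bd.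
(* [A] need not contain constants, so [s = k (f x)] is recovered from [s ^+ 2]
   and [(s ^+ 2 + s ^+ 3) / 2], which map [-1, 1] into [0, 1]. *)
have Apow n : A (fun x => (k (f x) ^+ n.+1)%:C).
  elim: n => // n IHn; under eq_fun do rewrite exprS rmorphM /=.
  exact: mulA _ _ Ak IHn.
have sqr_eq : k a1 ^+ 2 = k a2 ^+ 2.
  apply: (P_eq (fun s => s ^+ 2)); [exact: exprn_continuous | exact: Apow 1%N |].
  by move=> s /andP[s1 s2]; apply/andP; split; nra.
apply: (@sqr_cube_inj R _ _ sqr_eq).
have : (k a1 ^+ 2 + k a1 ^+ 3) / 2 = (k a2 ^+ 2 + k a2 ^+ 3) / 2.
  apply: (P_eq (fun s => (s ^+ 2 + s ^+ 3) / 2)).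
  - move=> s; apply: cvgM; last exact: cvg_cst.
    by apply: cvgD; apply: exprn_continuous.
  - have := scaleA (2^-1)%:C _ (addA _ _ (Apow 1%N) (Apow 2%N)).
    by under eq_fun do rewrite -rmorphD mulrC -rmorphM.
  - by move=> s /andP[s1 s2]; rewrite !exprS !expr0 !mulr1; apply/andP; split; nra.
by rewrite sqr_eq; lra.
Qed.

End AntisymmetricClusterPoints.

Section FunctionClasses.
Context {R : realType} {T : topologicalType} {A : set (T -> R[i])}.

Lemma selfadjoint_subalgebra_Re phi : selfadjoint_subalgebra_Cb A -> A phi ->
  A (fun x => (complex.Re (phi x))%:C).
Proof.
move=> [[_ _ addA scaleA] [_ conjA]] Aphi.
have -> : (fun x => (complex.Re (phi x))%:C) = (fun x => 2^-1 * (phi x + (phi x)^*)).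
  by apply: funext => x; rewrite ReJ_add mulrC.
exact: scaleA _ _ (addA _ _ Aphi (conjA _ Aphi)).
Qed.

Lemma selfadjoint_subalgebra_Im phi : selfadjoint_subalgebra_Cb A -> A phi ->
  A (fun x => (complex.Im (phi x))%:C).
Proof.
move=> Aalg Aphi; have [[_ _ _ scaleA] _] := Aalg.
have -> : (fun x => (complex.Im (phi x))%:C) =
    (fun x => -1 * (complex.Re ('i * phi x))%:C).
  by apply: funext => x; rewrite [_ * phi x]mulrC ReiNIm rmorphN mulN1r opprK.
exact: scaleA _ _ (selfadjoint_subalgebra_Re _ Aalg (scaleA 'i _ Aphi)).
Qed.

Lemma C01_or_Cb_bounded phi : in_C01 A \/ selfadjoint_subalgebra_Cb A -> A phi ->
  exists2 M : R, 0 < M & forall x, `|phi x| <= M%:C.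
Proof.
case=> [C01 | [[Cb _ _ _] _]] Aphi.
  exists 1 => // x; have [_ /(_ x) /andP[phi0 phi1]] := C01 _ Aphi.
  by rewrite ger0_norm.
have [_ [M phiM]] := Cb _ Aphi; exists (Num.max 1 M) => [|x].
  by rewrite lt_max ltr01.
by apply: le_trans (phiM x) _; rewrite lecR le_max lexx orbT.
Qed.

End FunctionClasses.

Lemma antisymmetric_scaled_cluster_eq {R : realType} {T : topologicalType}
    {A : set (T -> R[i])} {F : set (set T)} {Z0 : set T} {phi : T -> R[i]} {M : R}
    {a1 a2 : R * R} :
    in_C01 A \/ selfadjoint_subalgebra_Cb A -> A_antisymmetric A F -> F Z0 ->
    A phi -> 0 < M -> (forall x, `|phi x| <= M%:C) ->
    (forall Z, F Z -> closure ((scaled_coords M \o phi) @` Z) a1) ->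
    (forall Z, F Z -> closure ((scaled_coords M \o phi) @` Z) a2) ->
  of_scaled_coords M a1 = of_scaled_coords M a2.
Proof.
move=> hA antiA FZ0 Aphi M0 phiM cl_a1 cl_a2.
have phiK x : of_scaled_coords M (scaled_coords M (phi x)) = phi x.
  by rewrite scaled_coordsK ?gt_eqF.
case: hA => [C01 | Aalg].
  apply: (antisymmetric_cluster_eq FZ0 antiA cl_a1 cl_a2 _ (continuous_of_scaled_coords M)).
    by apply: (eq_ind phi A Aphi); apply/funext => x; rewrite /= phiK.
  by move=> x; rewrite /= phiK; have [_] := C01 _ Aphi; apply.
have [[_ _ addA scaleA] [mulA _]] := Aalg.
have scaleA_real (r : T -> R) : A (fun x => (r x)%:C) -> A (fun x => (r x / M)%:C).
  move=> Ar; have := scaleA (M^-1)%:C _ Ar.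
  by under eq_fun do rewrite -rmorphM mulrC.
have coord_eq := antisymmetric_cluster_eq_real FZ0 antiA cl_a1 cl_a2 addA mulA scaleA.
have [Re_eq Im_eq] : a1.1 = a2.1 /\ a1.2 = a2.2.
  split; apply: coord_eq.
  - by move=> a; exact: cvg_fst.
  - exact: scaleA_real _ (selfadjoint_subalgebra_Re _ Aalg Aphi).
  - by move=> x; have [] := scaled_coords_bound _ _ M0 (phiM x).
  - by move=> a; exact: cvg_snd.
  - exact: scaleA_real _ (selfadjoint_subalgebra_Im _ Aalg Aphi).
  - by move=> x; have [] := scaled_coords_bound _ _ M0 (phiM x).
by rewrite /of_scaled_coords Re_eq Im_eq.
Qed.

Lemma antisymmetric_unseparated {R : realType} {T : topologicalType}
    {A : set (T -> R[i])} {F : set (set T)} {Z0 S1 S2 : set T} {phi : T -> R[i]} :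
    in_C01 A \/ selfadjoint_subalgebra_Cb A -> A_antisymmetric A F ->
    F Z0 -> (forall Z Z', F Z -> F Z' -> F (Z `&` Z')) ->
    (forall Z, F Z -> Z `&` S1 !=set0) -> (forall Z, F Z -> Z `&` S2 !=set0) ->
    A phi ->
  closure (phi @` S1) `&` closure (phi @` S2) !=set0.
Proof.
move=> hA antiA FZ0 FI meet1 meet2 Aphi.
have [M M0 phiM] := C01_or_Cb_bounded _ hA Aphi.
pose f := scaled_coords M \o phi; pose J := of_scaled_coords M.
have cluster S : (forall Z, F Z -> Z `&` S !=set0) ->
    exists a, (forall Z, F Z -> closure (f @` Z) a) /\ closure (f @` S) a.
  have cK : compact (`[-1, 1]%classic `*` `[-1, 1]%classic : set (R * R)).
    by apply: compact_setX; exact: segment_compact.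
  apply: (compact_trace_cluster cK _ FZ0 FI) => x.
  by have [] := scaled_coords_bound _ _ M0 (phiM x); split; rewrite /= in_itv.
have [a1 [cl_a1 clS1]] := cluster _ meet1; have [a2 [cl_a2 clS2]] := cluster _ meet2.
have clJ a S : closure (f @` S) a -> closure (phi @` S) (J a).
  have -> : phi @` S = J @` (f @` S).
    rewrite image_comp; congr image; apply/funext => x.
    by rewrite /J /f /= scaled_coordsK ?gt_eqF.
  exact: closure_image_continuous (continuous_of_scaled_coords M a).
exists (J a1); split; first exact: clJ.
have -> : J a1 = J a2.
  exact: antisymmetric_scaled_cluster_eq hA antiA FZ0 Aphi M0 phiM cl_a1 cl_a2.
exact: clJ.
Qed.

Theorem corollary2p15 (R : realType) (Omega : topologicalType)
    (hOmega : hausdorff_space Omega) (crOmega : completely_regular_space Omega)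
    (betaOmega : topologicalType) (e : Omega -> betaOmega)
    (he : is_stone_cech e)
    (A : set (Omega -> R[i]))
    (hA : in_C01 A \/ selfadjoint_subalgebra_Cb A)
    (hsep : separates_zero_sets A)
    (F : set (set Omega)) (hF : z_filter R F) (hanti : A_antisymmetric A F) :
  exists p : betaOmega, \bigcap_(Z in F) closure (e @` Z) = [set p].
Proof.
case: hF => [[Z0 FZ0] _ F0 FI _]; case: he => [[cK hK ce _ _] _].
have [p [clp _]] : exists p, (forall Z, F Z -> closure (e @` Z) p) /\
    closure (e @` [set: Omega]) p.
  apply: (compact_trace_cluster cK _ FZ0 FI) => // Z FZ; rewrite setIT.
  by apply/set0P/eqP => Z_0; rewrite Z_0 in FZ.
exists p; apply/seteqP; split => [q clq|_ ->]; last exact: clp.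
apply: contrapT => qp.
have [Z1 [Z2 [zZ1 zZ2 Z12 meet1 meet2]]] :=
  separate_points_by_zero_sets R cK hK ce (fun pq => qp (esym pq)).
have [phi Aphi disj] := hsep _ _ zZ1 zZ2 Z12.
have meetZ1 Z : F Z -> Z `&` Z1 !=set0 by move=> FZ; apply/meet1/clp.
have meetZ2 Z : F Z -> Z `&` Z2 !=set0 by move=> FZ; apply/meet2/clq.
have := antisymmetric_unseparated hA hanti FZ0 FI meetZ1 meetZ2 Aphi.
by rewrite disj => -[].
Qed.
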